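(* Suppose monotone treatment response and monotone treatment selection hold. Then under Design 1, for all $x\in\mathcal X$, $\Gamma(x,p_0)\le\Gamma(x,0)$.
   Context: Population variables: $Y^*\in\{0,1\}$ (outcome), $T^*\in\{0,1\}$ (treatment), $X^*$ (covariate vector); potential outcomes $Y^*(1),Y^*(0)\in\{0,1\}$ satisfy $Y^*=T^*Y^*(1)+(1-T^* )Y^*(0)$; $p_0:=\Pr(Y^*=1)$. The observed vector $(Y,T,X)$ arises from Bernoulli sampling: $Y\in\{0,1\}$ is drawn with known probability $h_0:=\Pr(Y=1)\in(0,1)$, and given $Y=y$, $(T,X)$ is drawn from a distribution $\mathcal P_y$. Design 1 (case-control): for all $t\in\{0,1\}$, $x\in\mathcal X$, $y\in\{0,1\}$, $f_{X|Y}(x\mid y)=f_{X^*|Y^*}(x\mid y)$ and $\Pr(T=t\mid X=x,Y=y)=\Pr(T^*=t\mid X^*=x,Y^*=y)$, where $f$ denotes densities (or mass functions). Standing common support assumption: the support of $X^*$ and that of $X$ given $Y=y$ for $y=0,1$ coincide; call it $\mathcal X$. Let $\Pi(t\mid y,x):=\Pr(T=t\mid Y=y,X=x)$, assumed nonzero for all $t,y$. For $p\in[0,1]$, $r(x,p):=\frac{p(1-h_0)\Pr(Y=1\mid X=x)}{p(1-h_0)\Pr(Y=1\mid X=x)+h_0(1-p)\Pr(Y=0\mid X=x)}$ and $\Gamma(x,p):=\frac{\Pi(1\mid 1,x)}{\Pi(0\mid 1,x)}\cdot\frac{\Pi(0\mid 0,x)+r(x,p)\{\Pi(0\mid 1,x)-\Pi(0\mid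 0,x)\}}{\Pi(1\mid 0,x)+r(x,p)\{\Pi(1\mid 1,x)-\Pi(1\mid 0,x)\}}$. Monotone treatment response: $Y^*(1)\ge Y^*(0)$ almost surely. Monotone treatment selection: for all $t\in\{0,1\}$, $x\in\mathcal X$, $\Pr\{Y^*(t)=1\mid T^*=1,X^*=x\}\ge\Pr\{Y^*(t)=1\mid T^*=0,X^*=x\}$. *)

From HB Require Import structures.
From mathcomp Require Import all_boot all_order all_algebra.
From mathcomp Require Import all_classical all_reals all_analysis.
Set Implicit Arguments.
Unset Strict Implicit.
Unset Printing Implicit Defensive.
Import Order.TTheory GRing.Theory Num.Theory.
Local Open Scope ring_scope.

(* A population "type of unit": (Y*(0), Y*(1), T* ). *)
Definition utype := (bool * bool * bool)%type.
Definition y0 (w : utype) : bool := w.1.1.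
Definition y1 (w : utype) : bool := w.1.2.
Definition tr (w : utype) : bool := w.2.
Definition ypot (t : bool) (w : utype) : bool := if t then y1 w else y0 w.
Definition ystar (w : utype) : bool := ypot (tr w) w.

Section Defs.
Context {R : realType} {d : measure_display} {T : measurableType d}.

(* The joint law of (Y*(0),Y*(1),T*,X* ) is  fX(x) q(x,w) mu(dx):
   fX is the density of X* w.r.t. the reference measure mu and
   q x is the conditional p.m.f. of (Y*(0),Y*(1),T* ) given X* = x. *)

Definition cprob (q : T -> utype -> R) (x : T) (A : pred utype) : R :=
  \sum_(w : utype | A w) q x w.

Definition ccprob (q : T -> utype -> R) (x : T) (A B : pred utype) : R :=
  cprob q x [pred w | A w && B w] / cprob q x B.

Definition PrYs_X (q : T -> utype -> R) (y : bool) (x : T) : R :=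
  cprob q x [pred w | ystar w == y].

Definition p0 (mu : {measure set T -> \bar R}) (fX : T -> R)
  (q : T -> utype -> R) : R :=
  fine (\int[mu]_x (fX x * PrYs_X q true x)%:E).

Definition PrYs (mu : {measure set T -> \bar R}) (fX : T -> R)
  (q : T -> utype -> R) (y : bool) : R :=
  if y then p0 mu fX q else 1 - p0 mu fX q.

Definition fXs_Ys (mu : {measure set T -> \bar R}) (fX : T -> R)
  (q : T -> utype -> R) (y : bool) (x : T) : R :=
  fX x * PrYs_X q y x / PrYs mu fX q y.

Definition PiStar (q : T -> utype -> R) (t y : bool) (x : T) : R :=
  ccprob q x [pred w | tr w == t] [pred w | ystar w == y].

(* Observed data: Pr(Y=1) = h0, fXY y = f_{X|Y}(. | y),
   Pi t y x = Pi(t | y, x) = Pr(T = t | Y = y, X = x).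
   Pr(Y = 1 | X = x) by Bayes' rule: *)
Definition PrY1_X (h0 : R) (fXY : bool -> T -> R) (x : T) : R :=
  h0 * fXY true x / (h0 * fXY true x + (1 - h0) * fXY false x).

Definition r (h0 : R) (fXY : bool -> T -> R) (x : T) (p : R) : R :=
  p * (1 - h0) * PrY1_X h0 fXY x /
  (p * (1 - h0) * PrY1_X h0 fXY x + h0 * (1 - p) * (1 - PrY1_X h0 fXY x)).

Definition Gamma (h0 : R) (fXY : bool -> T -> R) (Pi : bool -> bool -> T -> R)
  (x : T) (p : R) : R :=
  Pi true true x / Pi false true x *
  ((Pi false false x + r h0 fXY x p * (Pi false true x - Pi false false x)) /
   (Pi true false x + r h0 fXY x p * (Pi true true x - Pi true false x))).

(* Monotone treatment response: Y*(1) >= Y*(0) (conditionally on X* = x,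
   for every x in the support S). *)
Definition MTR (q : T -> utype -> R) (S : set T) : Prop :=
  forall x, S x -> cprob q x [pred w | y0 w && ~~ y1 w] = 0.

Definition MTS (q : T -> utype -> R) (S : set T) : Prop :=
  forall (t : bool) x, S x ->
    ccprob q x [pred w | ypot t w] [pred w | tr w]
    >= ccprob q x [pred w | ypot t w] [pred w | ~~ tr w].

Definition design1 (mu : {measure set T -> \bar R}) (fX : T -> R)
  (q : T -> utype -> R) (S : set T) (fXY : bool -> T -> R)
  (Pi : bool -> bool -> T -> R) : Prop :=
  forall (t y : bool) x, S x ->
    fXY y x = fXs_Ys mu fX q y x /\ Pi t y x = PiStar q t y x.

End Defs.

From HB Require Import structures.
From mathcomp Require Import all_boot all_order all_algebra.
From mathcomp Require Import all_classical all_reals all_analysis.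
From mathcomp Require Import ring lra.
Import Order.TTheory GRing.Theory Num.Theory.
Local Open Scope ring_scope.

(* Fix x in the support and write n_ty = Pr(T*=t, Y*=y | X*=x).  Under
   case-control sampling, r(x, p0) is exactly Pr(Y*=1 | X*=x), so by the law
   of total probability Gamma(x, p0) = Pi(1|1,x)/Pi(0|1,x) * (n_00 + n_01)/(n_10 + n_11),
   whereas r(x, 0) = 0 gives Gamma(x, 0) = Pi(1|1,x)/Pi(0|1,x) * n_00/n_10.
   The comparison of the two odds is equivalent to
   Pr(Y*=1 | T*=0, x) <= Pr(Y*=1 | T*=1, x), and indeed
   Pr(Y*=1 | T*=1) = Pr(Y*(1)=1 | T*=1) >= Pr(Y*(1)=1 | T*=0)     (MTS)
                                       >= Pr(Y*(0)=1 | T*=0)     (MTR)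
                                        = Pr(Y*=1 | T*=0). *)

Lemma odds_le_of_rate_le (R : realFieldType) (a b c d : R) :
  0 < a -> 0 < b -> 0 < c -> 0 < d ->
  b / (a + b) <= d / (c + d) -> (a + b) / (c + d) <= a / c.
Proof.
move=> a_gt0 b_gt0 c_gt0 d_gt0.
rewrite ler_pdivrMr ?addr_gt0 // mulrAC ler_pdivlMr ?addr_gt0 // => rate.
rewrite ler_pdivrMr ?addr_gt0 // mulrAC ler_pdivlMr //.
nra.
Qed.

Lemma total_prob_mix (R : fieldType) (m0 m1 n0 n1 : R) :
  m0 + m1 = 1 -> m0 != 0 -> m1 != 0 ->
  n0 / m0 + m1 * (n1 / m1 - n0 / m0) = n0 + n1.
Proof.
move=> m_sum m0_neq0 m1_neq0.
have m1E : m1 = 1 - m0 by rewrite -m_sum addrC addKr.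
by rewrite m1E in m1_neq0 *; field; rewrite m0_neq0 m1_neq0.
Qed.

Section ConditionalLaw.
Context {R : realType} {d : measure_display} {T : measurableType d}.
Variables (q : T -> utype -> R) (x : T).
Hypothesis q_ge0 : forall w, 0 <= q x w.

Definition jointTY (t y : bool) : R :=
  cprob q x [pred w | (tr w == t) && (ystar w == y)].

Lemma cprob_ge0 (A : pred utype) : 0 <= cprob q x A.
Proof. exact: sumr_ge0. Qed.

Lemma cprob_le_mod_null (A B N : pred utype) :
  cprob q x N = 0 -> (forall w, A w -> B w || N w) ->
  cprob q x A <= cprob q x B.
Proof.
move=> N0 AsubBN.
have qN w : N w -> q x w = 0 by apply: (psumr_eq0P _ N0) => ? _.
rewrite /cprob big_mkcond [leRHS]big_mkcond /=; apply: ler_sum => w _.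
case Aw: (A w); case Bw: (B w) => //=.
by move: (AsubBN w Aw); rewrite Bw /= => /qN ->.
Qed.

Lemma cprob_split (A : pred utype) (f : pred utype) :
  cprob q x A = cprob q x [pred w | A w && ~~ f w] + cprob q x [pred w | A w && f w].
Proof. by rewrite /cprob (bigID f) addrC. Qed.

Lemma PrYs_X_jointE y : PrYs_X q y x = jointTY false y + jointTY true y.
Proof.
rewrite /PrYs_X (cprob_split _ tr).
by congr (_ + _); apply: eq_bigl => w /=; case: (tr w); rewrite andbC.
Qed.

Lemma cprob_tr_jointE t :
  cprob q x [pred w | tr w == t] = jointTY t false + jointTY t true.
Proof.
rewrite (cprob_split _ ystar).
by congr (_ + _); apply: eq_bigl => w /=; case: (ystar w).
Qed.

Lemma PrYs_X_sum1 :
  \sum_(w : utype) q x w = 1 -> PrYs_X q false x + PrYs_X q true x = 1.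
Proof.
move=> <-; rewrite /PrYs_X /cprob [RHS](bigID ystar) addrC.
by congr (_ + _); apply: eq_bigl => w /=; case: (ystar w).
Qed.

Lemma PiStar_jointE t y : PiStar q t y x = jointTY t y / PrYs_X q y x.
Proof. by []. Qed.

Lemma ystar_rate_T0_le_T1 :
  cprob q x [pred w | y0 w && ~~ y1 w] = 0 ->
  ccprob q x [pred w | ypot true w] [pred w | ~~ tr w] <=
    ccprob q x [pred w | ypot true w] [pred w | tr w] ->
  jointTY false true / cprob q x [pred w | tr w == false] <=
    jointTY true true / cprob q x [pred w | tr w == true].
Proof.
move=> mtr mts.
have T1E : cprob q x [pred w | tr w] = cprob q x [pred w | tr w == true].
  by apply: eq_bigl => w /=; rewrite eqb_id.
have T0E : cprob q x [pred w | ~~ tr w] = cprob q x [pred w | tr w == false].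
  by apply: eq_bigl => w /=; rewrite eqbF_neg.
have Y1T1E : jointTY true true = cprob q x [pred w | ypot true w && tr w].
  by apply: eq_bigl => -[[? []] []].
move: mts; rewrite /ccprob T1E T0E -Y1T1E; apply: le_trans.
apply: ler_wpM2r; first by rewrite invr_ge0 cprob_ge0.
by apply: (cprob_le_mod_null _ _ _ mtr) => -[[[] []] []].
Qed.

End ConditionalLaw.

Section SamplingCorrection.
Context {R : realType} {d : measure_display} {T : measurableType d}.
Context {h0 : R} {fXY : bool -> T -> R} {x : T}.
Hypotheses (h0_gt0 : 0 < h0) (h0_lt1 : h0 < 1).
Hypotheses (fXY1_gt0 : 0 < fXY true x) (fXY0_gt0 : 0 < fXY false x).

Lemma r0 : r h0 fXY x 0 = 0.
Proof. by rewrite /r !mul0r. Qed.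

Lemma rE p : p * fXY true x + (1 - p) * fXY false x != 0 ->
  r h0 fXY x p = p * fXY true x / (p * fXY true x + (1 - p) * fXY false x).
Proof.
move=> D_neq0; rewrite /r /PrY1_X.
set f1 := fXY true x; set f0 := fXY false x.
have h0h0c_gt0 : 0 < h0 * (1 - h0) by rewrite mulr_gt0 ?subr_gt0.
have mix_neq0 : h0 * f1 + (1 - h0) * f0 != 0.
  by rewrite gt_eqF // addr_gt0 ?mulr_gt0 ?subr_gt0.
field; rewrite D_neq0 mix_neq0 /=.
have -> : p * (1 - h0) * (h0 * f1) +
    h0 * (1 - p) * (h0 * f1 + (1 - h0) * f0 - h0 * f1) =
  h0 * (1 - h0) * (p * f1 + (1 - p) * f0) by ring.
by rewrite mulf_neq0 // gt_eqF.
Qed.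

Lemma r_at_prevalence {p F a0 a1 : R} : F != 0 -> a0 + a1 = 1 ->
  fXY true x = F * a1 / p -> fXY false x = F * a0 / (1 - p) ->
  r h0 fXY x p = a1.
Proof.
move=> F_neq0 a_sum f1E f0E.
have p_neq0 : p != 0.
  by apply: contraTneq fXY1_gt0 => p0; rewrite f1E p0 invr0 mulr0 ltxx.
have pc_neq0 : 1 - p != 0.
  by apply: contraTneq fXY0_gt0 => pc0; rewrite f0E pc0 invr0 mulr0 ltxx.
have pf1 : p * fXY true x = F * a1 by rewrite f1E mulrC divfK.
have pf0 : (1 - p) * fXY false x = F * a0 by rewrite f0E mulrC divfK.
have D : p * fXY true x + (1 - p) * fXY false x = F.
  by rewrite pf1 pf0 -mulrDr addrC a_sum mulr1.
by rewrite rE D // pf1 mulrAC divff // mul1r.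
Qed.

End SamplingCorrection.

Theorem lemmaA6 (R : realType) (d : measure_display) (T : measurableType d)
  (mu : {measure set T -> \bar R})
  (* population: density of X* and conditional pmf of (Y*(0),Y*(1),T* ) *)
  (fX : T -> R) (q : T -> utype -> R)
  (* observed data *)
  (h0 : R) (fXY : bool -> T -> R) (Pi : bool -> bool -> T -> R)
  (* common support *)
  (S : set T)
  (fX_meas : measurable_fun setT fX)
  (fX_ge0 : forall x, 0 <= fX x)
  (fX_int : (\int[mu]_x (fX x)%:E = 1)%E)
  (q_meas : forall w, measurable_fun setT (fun x => q x w))
  (q_ge0 : forall x w, 0 <= q x w)
  (q_sum1 : forall x, \sum_(w : utype) q x w = 1)
  (h0_gt0 : 0 < h0) (h0_lt1 : h0 < 1)
  (fXY_ge0 : forall y x, 0 <= fXY y x)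
  (supp_Xs : forall x, 0 < fX x <-> S x)
  (supp_X : forall y x, 0 < fXY y x <-> S x)
  (Pi_neq0 : forall t y x, S x -> Pi t y x != 0)
  (Hdesign : design1 mu fX q S fXY Pi)
  (Hmtr : MTR q S) (Hmts : MTS q S) :
  forall x, S x -> Gamma h0 fXY Pi x (p0 mu fX q) <= Gamma h0 fXY Pi x 0.
Proof.
move=> x Sx.
have PiE t y : Pi t y x = jointTY q x t y / PrYs_X q y x.
  by rewrite -PiStar_jointE; case: (Hdesign t y x Sx).
have n_gt0 t y : 0 < jointTY q x t y.
  rewrite lt0r (cprob_ge0 _ _ (q_ge0 x)) andbT.
  apply: contra (Pi_neq0 t y x Sx) => /eqP n0.
  by rewrite PiE n0 mul0r.
have m_gt0 y : 0 < PrYs_X q y x by rewrite PrYs_X_jointE addr_gt0.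
have m0_neq0 := lt0r_neq0 (m_gt0 false); have m1_neq0 := lt0r_neq0 (m_gt0 true).
have m_sum := PrYs_X_sum1 _ _ (q_sum1 x).
have fXY_gt0 y : 0 < fXY y x by apply/supp_X.
have fX_neq0 : fX x != 0 by rewrite gt_eqF //; apply/supp_Xs.
have f1E := (Hdesign true true x Sx).1; have f0E := (Hdesign true false x Sx).1.
rewrite /fXs_Ys /= in f1E f0E.
have r_p0 : r h0 fXY x (p0 mu fX q) = PrYs_X q true x :=
  r_at_prevalence h0_gt0 h0_lt1 (fXY_gt0 true) (fXY_gt0 false) fX_neq0 m_sum
    f1E f0E.
rewrite /Gamma r_p0 r0 !mul0r !addr0 !PiE !total_prob_mix //.
apply: ler_wpM2l; first by rewrite !divr_ge0 ?ltW.
have -> : jointTY q x false false / PrYs_X q false x /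
    (jointTY q x true false / PrYs_X q false x) =
  jointTY q x false false / jointTY q x true false.
  by field; rewrite m0_neq0 lt0r_neq0.
apply: odds_le_of_rate_le => //.
have := ystar_rate_T0_le_T1 _ _ (q_ge0 x) (Hmtr x Sx) (Hmts true x Sx).
by rewrite !cprob_tr_jointE.
Qed.
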